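(* Let $T$ be the BFS tree produced by temporal BFS on a temporal graph $G=(V,E)$ from source $s$ with starting time $t_s$, let $v\neq s$ be a vertex reachable from $s$, and let $v_o$ be the occurrence of $v$ in $T$ of smallest level (the first occurrence of $v$). Then the level of $v_o$ equals $dist(s,v)$, the minimum number of hops of a temporal path from $s$ to $v$ starting at or after $t_s$.
   Context: A temporal graph is a pair $G=(V,E)$ where $V$ is a finite set of vertices and $E$ is a finite set of temporal edges, i.e. triples $(u,v,t)$ with $u,v\in V$, $u\neq v$, $t\in\mathbb{R}$ (the time at which the edge is active); distinct elements of $E$ are distinct triples. Fix $t_s\in\mathbb{R}$ and $s\in V$. A temporal path from $x$ to $y$ (starting at or after $t_s$) is a sequence $P=\langle (w_1,w_2,t_1),\dots,(w_k,w_{k+1},t_k)\rangle$ of $k\ge1$ edges of $E$ with $w_1=x$, $w_{k+1}=y$ and $t_s\le t_1\le t_2\le\dots\le t_k$; its number of hops is $k$. A vertex $y$ is reachable from $s$ if such a path from $s$ to $y$ exists. Temporal BFS. Records are tuples $(x,d,\tau,p)$ (vertex $x$, level $d$, time $\tau$, predecessor record $p$ or none); every record ever created is an occurrence (node) of the BFS tree $T$, rooted at the initial record, with a tree edge from the predecessor record to the record; the level and time of an occurrence are the final values of its fields. For each $x\in V$ a current value $\sigma(x)$ is kept, initially $\infty$, and set to $\tau$ whenever a record of $x$ is created or its time is updated to $\tau$. Initially the FIFO queue $Q$ contains only $(s,0,t_s,\text{none})$ and $\sigma(s)=t_s$; no edge is traversed. While $Q\neq\emptyset$: pop the front record $R=(u,d_u,\sigma_u,p_u)$;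 let $B$ be the set of edges $(u,v,t)\in E$ not yet traversed with $\sigma_u\le t$; for each vertex $v$ such that $B$ contains an edge to $v$ (in any order), let $e=(u,v,t)$ be the edge of $B$ to $v$ with smallest $t$, mark $e$ traversed, and: (i) if $Q$ contains no record of $v$ and $\sigma(v)>t$, create $(v,d_u+1,t,R)$ and append it to $Q$; (ii) if $Q$ contains a record of $v$ with level $d_u+1$ and $\sigma(v)>t$, set that record's time to $t$ and predecessor to $R$; (iii) if $Q$ contains a record of $v$ but none with level $d_u+1$, and $\sigma(v)>t$, create $(v,d_u+1,t,R)$ and append it to $Q$. *)

From Stdlib Require Import Reals List Relations.
Import ListNotations.
Open Scope R_scope.
Set Implicit Arguments.

Definition edge (V : Type) : Type := (V * V * R)%type.

Fixpoint twalk (V : Type) (E : list (edge V)) (x y : V) (tmin : R)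
  (P : list (edge V)) : Prop :=
  match P with
  | [] => x = y
  | (a, b, t) :: P' => In (a, b, t) E /\ a = x /\ tmin <= t /\ twalk E b y t P'
  end.

Definition tpath (V : Type) (E : list (edge V)) (ts : R) (x y : V)
  (P : list (edge V)) : Prop := P <> [] /\ twalk E x y ts P.

Definition reachable (V : Type) (E : list (edge V)) (ts : R) (s y : V) : Prop :=
  exists P, tpath E ts s y P.

Definition is_dist (V : Type) (E : list (edge V)) (ts : R) (s y : V) (k : nat) : Prop :=
  (exists P, tpath E ts s y P /\ length P = k) /\
  (forall P, tpath E ts s y P -> (k <= length P)%nat).

(* A record (x, d, tau, p); the predecessor is the index (creation id) of
   the predecessor record.  Records are identified by their index in the
   list of all records ever created (= the nodes of the BFS tree T). *)
Record rec (V : Type) := mkRec { rv : V; rlvl : nat; rtime : R; rpred : option nat }.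

(* Phase of the algorithm: either about to pop the front of the queue, or
   processing the popped record [rid] = (u, d, tau, _), where B is the set of
   edges (u, v, t) of E not in [tr0] (the traversed edges at pop time) with
   tau <= t, and [done] lists the target vertices already handled. *)
Inductive phase (V : Type) :=
| PPop : phase V
| PProc : nat -> V -> nat -> R -> list (edge V) -> list V -> phase V.

Record state (V : Type) := mkSt {
  recs  : list (rec V);          (* all records ever created, by id *)
  queue : list nat;              (* FIFO queue of record ids, front first *)
  sigma : V -> option R;         (* current value; None = infinity *)
  trav  : list (edge V);
  ph    : phase V }.

Definition sgt (o : option R) (t : R) : Prop :=
  match o with None => True | Some x => t < x end.

Definition inB (V : Type) (E : list (edge V)) (u : V) (tau : R)
  (tr0 : list (edge V)) (e : edge V) : Prop :=
  In e E /\ fst (fst e) = u /\ ~ In e tr0 /\ tau <= snd e.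

Definition qhas (V : Type) (st : state V) (v : V) (P : rec V -> Prop) : Prop :=
  exists j r, In j (queue st) /\ nth_error (recs st) j = Some r /\ rv r = v /\ P r.

Fixpoint upd_nth (A : Type) (l : list A) (j : nat) (a : A) : list A :=
  match l, j with
  | [], _ => []
  | _ :: l', O => a :: l'
  | b :: l', S j' => b :: upd_nth l' j' a
  end.

Definition sig_upd (V : Type) (sg sg' : V -> option R) (v : V) (t : R) : Prop :=
  sg' v = Some t /\ forall x, x <> v -> sg' x = sg x.

Inductive step (V : Type) (E : list (edge V)) : state V -> state V -> Prop :=
| step_pop : forall st r q' R0,
    ph st = PPop V -> queue st = r :: q' -> nth_error (recs st) r = Some R0 ->
    step E st (mkSt (recs st) q' (sigma st) (trav st)
                 (PProc r (rv R0) (rlvl R0) (rtime R0) (trav st) []))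
| step_create : forall st r u d tau tr0 done v t sg',
    ph st = PProc r u d tau tr0 done -> ~ In v done ->
    inB E u tau tr0 (u, v, t) ->
    (forall t', inB E u tau tr0 (u, v, t') -> t <= t') ->
    sgt (sigma st v) t ->
    (* case (i): no record of v in Q; case (iii): some, but none of level d+1 *)
    (~ qhas st v (fun _ => True) \/
     (qhas st v (fun _ => True) /\ ~ qhas st v (fun r0 => rlvl r0 = S d))) ->
    sig_upd (sigma st) sg' v t ->
    step E st (mkSt (recs st ++ [mkRec v (S d) t (Some r)])
                    (queue st ++ [length (recs st)]) sg'
                    ((u, v, t) :: trav st) (PProc r u d tau tr0 (v :: done)))
| step_update : forall st r u d tau tr0 done v t sg' j Rj,
    ph st = PProc r u d tau tr0 done -> ~ In v done ->
    inB E u tau tr0 (u, v, t) ->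
    (forall t', inB E u tau tr0 (u, v, t') -> t <= t') ->
    sgt (sigma st v) t ->
    (* case (ii) *)
    In j (queue st) -> nth_error (recs st) j = Some Rj -> rv Rj = v -> rlvl Rj = S d ->
    sig_upd (sigma st) sg' v t ->
    step E st (mkSt (upd_nth (recs st) j (mkRec v (S d) t (Some r)))
                    (queue st) sg'
                    ((u, v, t) :: trav st) (PProc r u d tau tr0 (v :: done)))
| step_skip : forall st r u d tau tr0 done v t,
    ph st = PProc r u d tau tr0 done -> ~ In v done ->
    inB E u tau tr0 (u, v, t) ->
    (forall t', inB E u tau tr0 (u, v, t') -> t <= t') ->
    ~ sgt (sigma st v) t ->
    step E st (mkSt (recs st) (queue st) (sigma st)
                    ((u, v, t) :: trav st) (PProc r u d tau tr0 (v :: done)))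
| step_finish : forall st r u d tau tr0 done,
    ph st = PProc r u d tau tr0 done ->
    (forall v t, inB E u tau tr0 (u, v, t) -> In v done) ->
    step E st (mkSt (recs st) (queue st) (sigma st) (trav st) (PPop V)).

Definition init_state (V : Type) (s : V) (ts : R) (st : state V) : Prop :=
  recs st = [mkRec s 0 ts None] /\ queue st = [0%nat] /\
  sigma st s = Some ts /\ (forall x, x <> s -> sigma st x = None) /\
  trav st = [] /\ ph st = PPop V.

Definition final_state (V : Type) (st : state V) : Prop :=
  ph st = PPop V /\ queue st = [].

From Pilot Require Import Defs.
From Stdlib Require Import Reals List Relations Lia Lra Classical.
Import ListNotations.
Open Scope R_scope.

(* The proof is an invariant argument over the run [st0 ->* st].
   - Soundness: every record [(x, d, tau, _)] is reached from [s] by a temporal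
     walk with [d] hops ending by time [tau] (an edge of [B] extends the walk of
     the popped record), so the least level of [v] is the length of a path.
   - Completeness: we say a record list [covers] [x] at level [L] by time [t]
     when it has a record of [x] of level at most [L] and time at most [t]. A
     record is [expanded] when every edge leaving its vertex no earlier than
     its time leads to a vertex covered one level deeper. At termination every
     record is expanded, and following any temporal path [P] from [s] then
     covers [v] at level [|P|]. Records only
   ever improve ([refines]), which keeps earlier coverage valid. *)

Section ListFacts.
Context {A : Type}.

Lemma In_upd_nth (l : list A) j a x : In x (upd_nth l j a) -> x = a \/ In x l.
Proof.
  revert j; induction l as [|b l IH]; intros j H; [destruct H|].
  destruct j as [|j]; destruct H as [H|H]; simpl; auto.
  destruct (IH j H); auto.
Qed.

Lemma upd_nth_keeps (l : list A) j a x :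
  In x l -> In x (upd_nth l j a) \/ nth_error l j = Some x.
Proof.
  revert j; induction l as [|b l IH]; intros j H; [destruct H|].
  destruct j as [|j]; destruct H as [H|H]; subst; simpl; auto.
  destruct (IH j H); auto.
Qed.

Lemma nth_error_upd_nth_eq (l : list A) j a b :
  nth_error l j = Some b -> nth_error (upd_nth l j a) j = Some a.
Proof.
  revert j; induction l as [|c l IH]; intros [|j] H; simpl in *; try discriminate; eauto.
Qed.

Lemma nth_error_upd_nth_neq (l : list A) j a k :
  k <> j -> nth_error (upd_nth l j a) k = nth_error l k.
Proof.
  revert j k; induction l as [|c l IH]; intros [|j] [|k] H; simpl; auto; lia.
Qed.

Lemma length_upd_nth (l : list A) j a : length (upd_nth l j a) = length l.
Proof. revert j; induction l; intros [|j]; simpl; auto. Qed.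

Lemma nth_error_snoc_old (l : list A) a i x :
  nth_error (l ++ [a]) i = Some x -> i <> length l -> nth_error l i = Some x.
Proof.
  intros Hi Hne. destruct (Nat.lt_ge_cases i (length l)) as [Hlt|Hge].
  - rewrite nth_error_app1 in Hi; auto.
  - rewrite nth_error_app2 in Hi by exact Hge.
    destruct (i - length l)%nat as [|[|k]] eqn:Hk; simpl in Hi; try discriminate. lia.
Qed.

Lemma exists_min_by (f : A -> nat) (P : A -> Prop) (l : list A) :
  (exists x, In x l /\ P x) ->
  exists x, In x l /\ P x /\ forall y, In y l -> P y -> (f x <= f y)%nat.
Proof.
  induction l as [|a l IH]; intros (x & Hx & HPx); [destruct Hx|].
  destruct (classic (exists y, In y l /\ P y)) as [Htail|Htail].
  - destruct (IH Htail) as (m & Hm & HPm & Hmin).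
    destruct (classic (P a /\ (f a < f m)%nat)) as [[HPa Hlt]|Hnot].
    + exists a; split; [left; auto|split; auto].
      intros y [<-|Hy] HPy; [lia|]. specialize (Hmin y Hy HPy); lia.
    + exists m; split; [right; auto|split; auto].
      intros y [<-|Hy] HPy; [|auto].
      destruct (Nat.lt_ge_cases (f a) (f m)); auto. exfalso; auto.
  - destruct Hx as [<-|Hx]; [|exfalso; eauto].
    exists a; split; [left; auto|split; auto].
    intros y [<-|Hy] HPy; auto. exfalso; eauto.
Qed.

End ListFacts.

(* The levels of the records awaiting expansion form a block of level [d]
   followed by a block of level [d + 1]: the classical shape of a BFS queue. *)
Definition two_blocks (l : list nat) : Prop :=
  exists d a b, l = repeat d a ++ repeat (S d) b.

Lemma two_blocks_bounds d l :
  two_blocks (d :: l) -> forall L, In L (d :: l) -> (d <= L <= S d)%nat.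
Proof.
  intros (d' & [|a] & b & Hl) L HL; simpl in Hl; rewrite Hl in HL.
  - destruct b as [|b]; [discriminate|]. injection Hl as -> _.
    apply repeat_spec in HL. lia.
  - injection Hl as -> _. change (In L (repeat d' (S a) ++ repeat (S d') b)) in HL.
    apply in_app_or in HL. destruct HL as [HL|HL]; apply repeat_spec in HL; lia.
Qed.

Lemma two_blocks_tail d l : two_blocks (d :: l) -> two_blocks l.
Proof.
  intros (d' & [|a] & b & Hl); simpl in Hl.
  - destruct b as [|b]; [discriminate|]. injection Hl as _ ->.
    exists (S d'), b, O. simpl. rewrite app_nil_r. reflexivity.
  - injection Hl as _ ->. exists d', a, b. reflexivity.
Qed.

Lemma two_blocks_snoc d l : two_blocks (d :: l) -> two_blocks (d :: l ++ [S d]).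
Proof.
  intros (d' & [|a] & b & Hl); simpl in Hl.
  - destruct b as [|b]; [discriminate|]. injection Hl as Hd Hl. subst.
    exists (S d'), (S b), 1%nat. reflexivity.
  - injection Hl as Hd Hl. subst. exists d', (S a), (S b).
    change (d' :: (repeat d' a ++ repeat (S d') b) ++ [S d']
            = repeat d' (S a) ++ repeat (S d') (S b)).
    replace (S b) with (b + 1)%nat by lia.
    rewrite repeat_app, app_assoc. reflexivity.
Qed.

Fixpoint last_time {V : Type} (tmin : R) (P : list (edge V)) : R :=
  match P with [] => tmin | (_, _, t) :: P' => last_time t P' end.

Lemma twalk_snoc {V : Type} (E : list (edge V)) P x y z tmin t :
  twalk E x y tmin P -> In (y, z, t) E -> last_time tmin P <= t ->
  twalk E x z tmin (P ++ [(y, z, t)]) /\ last_time tmin (P ++ [(y, z, t)]) = t.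
Proof.
  revert x tmin; induction P as [|[[a b] t0] P IH]; intros x tmin Hw Hin Hl; simpl in *.
  - subst. repeat split; auto.
  - destruct Hw as (Hab & -> & Ht0 & Hw).
    destruct (IH b t0 Hw Hin Hl) as [Hw' Hl']. repeat split; auto.
Qed.

Section TemporalBFS.
Context {V : Type} (E : list (edge V)) (s : V) (ts : R).

Definition covers (l : list (rec V)) (x : V) (L : nat) (t : R) : Prop :=
  exists R0, In R0 l /\ rv R0 = x /\ (rlvl R0 <= L)%nat /\ rtime R0 <= t.

Lemma covers_weaken l x L L' t t' :
  (L <= L')%nat -> t <= t' -> covers l x L t -> covers l x L' t'.
Proof.
  intros HL Ht (R0 & HR & Hx & HlR & HtR). exists R0; repeat split; auto; [lia|lra].
Qed.

(* [l'] refines [l] when everything covered by [l] stays covered by [l']: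
   records may be added, or replaced by records of the same vertex and level
   with an earlier time. *)
Definition refines (l l' : list (rec V)) : Prop :=
  forall x L t, covers l x L t -> covers l' x L t.

Lemma refines_refl l : refines l l.
Proof. intros x L t H; exact H. Qed.

Lemma refines_app l m : refines l (l ++ m).
Proof.
  intros x L t (R0 & HR & H). exists R0; split; [apply in_or_app; auto|auto].
Qed.

Lemma refines_upd l j Rj nr :
  nth_error l j = Some Rj -> rv nr = rv Rj -> rlvl nr = rlvl Rj -> rtime nr <= rtime Rj ->
  refines l (upd_nth l j nr).
Proof.
  intros Hj Hv Hl Ht x L t (R0 & HR & Hx & HL & Ht0).
  destruct (upd_nth_keeps l j nr R0 HR) as [HR'|HR']; [exists R0; auto|].
  rewrite Hj in HR'. injection HR' as <-.
  exists nr; repeat split.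
  - eapply nth_error_In, nth_error_upd_nth_eq; eauto.
  - congruence.
  - lia.
  - lra.
Qed.

Definition expanded (l : list (rec V)) (R0 : rec V) : Prop :=
  forall x t, In (rv R0, x, t) E -> rtime R0 <= t -> covers l x (S (rlvl R0)) t.

Lemma walk_covers l P y x tmin L :
  (forall R0, In R0 l -> expanded l R0) ->
  twalk E y x tmin P -> covers l y L tmin ->
  covers l x (L + length P) (last_time tmin P).
Proof.
  intros Hexp; revert y tmin L; induction P as [|[[a b] t] P IH]; intros y tmin L Hw Hc.
  - simpl in *. subst. rewrite Nat.add_0_r. exact Hc.
  - destruct Hw as (Hin & -> & Ht & Hw). destruct Hc as (R0 & HR & Hy & HL & Ht0).
    rewrite <- Hy in Hin.
    pose proof (Hexp R0 HR b t Hin ltac:(lra)) as Hb.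
    simpl. rewrite <- Nat.add_succ_comm. apply (IH b t (S L) Hw).
    eapply covers_weaken; [| |exact Hb]; [lia|lra].
Qed.

Definition sound_record (R0 : rec V) : Prop :=
  exists P, twalk E s (rv R0) ts P /\ length P = rlvl R0 /\ last_time ts P <= rtime R0.

Lemma sound_extend u d tau p tr0 v t q :
  sound_record (mkRec u d tau p) -> inB E u tau tr0 (u, v, t) ->
  sound_record (mkRec v (S d) t q).
Proof.
  intros (P & Hw & Hlen & Hlast) (Hin & _ & _ & Ht); simpl in *.
  destruct (twalk_snoc E P s u v ts t Hw Hin ltac:(lra)) as [Hw' Hlast'].
  exists (P ++ [(u, v, t)]). simpl.
  rewrite length_app, Hlen, Hlast'. repeat split; auto; simpl; lia || lra.
Qed.

Definition sigma_consistent (sg : V -> option R) (l : list (rec V)) : Prop :=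
  (forall x m, sg x = Some m -> exists R0, In R0 l /\ rv R0 = x /\ rtime R0 <= m) /\
  (forall R0, In R0 l -> exists m, sg (rv R0) = Some m /\ m <= rtime R0).

Lemma sgt_below_records sg l R0 t :
  sigma_consistent sg l -> In R0 l -> sgt (sg (rv R0)) t -> t < rtime R0.
Proof.
  intros [_ Hrec] HR Hs. destruct (Hrec R0 HR) as (m & Hm & Hle).
  rewrite Hm in Hs. simpl in Hs. lra.
Qed.

Lemma sigma_consistent_update sg sg' l l' nr :
  sigma_consistent sg l -> sig_upd sg sg' (rv nr) (rtime nr) ->
  sgt (sg (rv nr)) (rtime nr) -> refines l l' -> In nr l' ->
  (forall R0, In R0 l' -> R0 = nr \/ In R0 l) ->
  sigma_consistent sg' l'.
Proof.
  intros [Hval Hrec] [Hnew Hold] Hs Href Hnr Hl'. split.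
  - intros x m Hm. destruct (classic (x = rv nr)) as [->|Hx].
    + rewrite Hnew in Hm. injection Hm as <-. exists nr; repeat split; auto; lra.
    + rewrite Hold in Hm by auto. destruct (Hval x m Hm) as (R0 & HR & Hv & Ht).
      destruct (Href x (rlvl R0) m) as (R1 & HR1 & Hv1 & _ & Ht1).
      * exists R0; repeat split; auto.
      * exists R1; auto.
  - intros R0 HR. destruct (classic (rv R0 = rv nr)) as [Hv|Hv].
    + rewrite Hv, Hnew. exists (rtime nr); split; auto.
      destruct (Hl' R0 HR) as [->|HR0]; [lra|].
      rewrite <- Hv in Hs. pose proof (sgt_below_records sg l R0 _ (conj Hval Hrec) HR0 Hs). lra.
    + rewrite Hold by auto. destruct (Hl' R0 HR) as [->|HR0]; [congruence|auto].
Qed.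


Definition lvl_of (l : list (rec V)) (j : nat) : nat :=
  match nth_error l j with Some R0 => rlvl R0 | None => O end.

Definition qlev (st : state V) : list nat := map (lvl_of (recs st)) (queue st).

Definition actlev (st : state V) : list nat :=
  match ph st with PProc _ _ d _ _ _ => d :: qlev st | PPop _ => qlev st end.

Definition processing (st : state V) : option nat :=
  match ph st with PProc r _ _ _ _ _ => Some r | PPop _ => None end.

Lemma actlev_proc {st r u d tau tr0 done} :
  ph st = PProc r u d tau tr0 done -> actlev st = d :: qlev st.
Proof. intros Hph. unfold actlev. rewrite Hph. reflexivity. Qed.

Lemma actlev_pop {st} : ph st = PPop V -> actlev st = qlev st.
Proof. intros Hph. unfold actlev. rewrite Hph. reflexivity. Qed.

Lemma qlev_snoc l q nr :
  (forall j, In j q -> (j < length l)%nat) ->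
  map (lvl_of (l ++ [nr])) (q ++ [length l]) = map (lvl_of l) q ++ [rlvl nr].
Proof.
  intros Hq. rewrite map_app. f_equal.
  - apply map_ext_in. intros j Hj. unfold lvl_of. rewrite nth_error_app1; auto.
  - simpl. unfold lvl_of. rewrite nth_error_app2, Nat.sub_diag; auto.
Qed.

Lemma qlev_upd l q j Rj nr :
  nth_error l j = Some Rj -> rlvl nr = rlvl Rj ->
  map (lvl_of (upd_nth l j nr)) q = map (lvl_of l) q.
Proof.
  intros Hj Hl. apply map_ext. intros k. unfold lvl_of.
  destruct (Nat.eq_dec k j) as [->|Hk].
  - rewrite (nth_error_upd_nth_eq _ _ _ _ Hj), Hj. exact Hl.
  - rewrite nth_error_upd_nth_neq; auto.
Qed.

Record Shape (st : state V) : Prop := {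
  sh_queue : forall j, In j (queue st) -> (j < length (recs st))%nat;
  sh_current : forall r u d tau tr0 done, ph st = PProc r u d tau tr0 done ->
    exists p, nth_error (recs st) r = Some (mkRec u d tau p);
  sh_window : two_blocks (actlev st);
  sh_levels : forall R0 L, In R0 (recs st) -> In L (actlev st) -> (rlvl R0 <= S L)%nat;
  sh_sigma : sigma_consistent (Defs.sigma st) (recs st);
  sh_sound : forall R0, In R0 (recs st) -> sound_record R0 }.
Arguments sh_queue {st}. Arguments sh_current {st}. Arguments sh_window {st}.
Arguments sh_levels {st}. Arguments sh_sigma {st}. Arguments sh_sound {st}.

Record Coverage (st : state V) : Prop := {
  cv_current : forall r u d tau tr0 done, ph st = PProc r u d tau tr0 done ->
    incl tr0 (trav st) /\
    forall x t, In x done -> inB E u tau tr0 (u, x, t) -> covers (recs st) x (S d) t;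
  cv_trav : forall y x t L, In (y, x, t) (trav st) -> In L (actlev st) ->
    covers (recs st) x (S L) t;
  cv_expanded : forall i Ri, nth_error (recs st) i = Some Ri -> ~ In i (queue st) ->
    processing st <> Some i -> expanded (recs st) Ri }.
Arguments cv_current {st}. Arguments cv_trav {st}. Arguments cv_expanded {st}.

Definition preserved (st st' : state V) : Prop :=
  Shape st' /\ Coverage st' /\ refines (recs st) (recs st').

Lemma current_level_bounds st r u d tau tr0 done :
  Shape st -> ph st = PProc r u d tau tr0 done ->
  forall L, In L (actlev st) -> (d <= L <= S d)%nat.
Proof.
  intros Hsh Hph. pose proof sh_window Hsh as Hw.
  rewrite (actlev_proc Hph) in *. apply two_blocks_bounds, Hw.
Qed.

Lemma current_sound st r u d tau tr0 done v t q :
  Shape st -> ph st = PProc r u d tau tr0 done -> inB E u tau tr0 (u, v, t) ->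
  sound_record (mkRec v (S d) t q).
Proof.
  intros Hsh Hph HB. destruct (sh_current Hsh _ _ _ _ _ _ Hph) as (p & Hr).
  eapply sound_extend; [|exact HB]. apply (sh_sound Hsh), (nth_error_In _ _ Hr).
Qed.

Lemma handle_coverage st st' r u d tau tr0 done v t :
  Shape st -> Coverage st ->
  ph st = PProc r u d tau tr0 done ->
  ph st' = PProc r u d tau tr0 (v :: done) ->
  (forall t', inB E u tau tr0 (u, v, t') -> t <= t') ->
  trav st' = (u, v, t) :: trav st ->
  refines (recs st) (recs st') ->
  covers (recs st') v (S d) t ->
  (forall L, In L (actlev st') -> In L (actlev st) \/ L = S d) ->
  (forall i Ri, nth_error (recs st') i = Some Ri -> ~ In i (queue st') -> i <> r ->
     nth_error (recs st) i = Some Ri /\ ~ In i (queue st)) ->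
  Coverage st'.
Proof.
  intros Hsh Hcv Hph Hph' Hmin Htr Href Hv Hact Hfin.
  destruct (cv_current Hcv _ _ _ _ _ _ Hph) as [Hincl Hdone].
  pose proof (current_level_bounds _ _ _ _ _ _ _ Hsh Hph) as Hbnd.
  assert (Hd' : forall L, In L (actlev st') -> (d <= L)%nat).
  { intros L HL. destruct (Hact L HL) as [HL'| ->]; [apply Hbnd, HL'|lia]. }
  assert (Hdin : In d (actlev st)) by (rewrite (actlev_proc Hph); left; auto).
  constructor.
  - intros r1 u1 d1 tau1 tr1 done1 Heq. rewrite Hph' in Heq.
    injection Heq as <- <- <- <- <- <-. split.
    + rewrite Htr. apply incl_tl, Hincl.
    + intros x t' [<-|Hx] HB.
      * eapply covers_weaken; [| |exact Hv]; [lia|apply Hmin, HB].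
      * apply Href, Hdone; auto.
  - intros y x t' L He HL. rewrite Htr in He. destruct He as [He|He].
    + injection He as <- <- <-.
      eapply covers_weaken; [| |exact Hv]; [specialize (Hd' L HL); lia|lra].
    + apply Href. destruct (Hact L HL) as [HL'| ->].
      * apply (cv_trav Hcv y x t' L He HL').
      * eapply covers_weaken; [| |apply (cv_trav Hcv y x t' d He Hdin)]; [lia|lra].
  - intros i Ri Hi Hq Hp. unfold processing in Hp. rewrite Hph' in Hp.
    destruct (Hfin i Ri Hi Hq) as [Hi' Hq']; [congruence|].
    intros x t' Hin Ht. apply Href. apply (cv_expanded Hcv i Ri Hi' Hq'); auto.
    unfold processing. rewrite Hph. congruence.
Qed.

Lemma pop_preserved st r q' R0 :
  Shape st -> Coverage st -> ph st = PPop V -> queue st = r :: q' ->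
  nth_error (recs st) r = Some R0 ->
  preserved st (mkSt (recs st) q' (Defs.sigma st) (trav st)
                  (PProc r (rv R0) (rlvl R0) (rtime R0) (trav st) [])).
Proof.
  intros Hsh Hcv Hph Hq Hr.
  assert (Hact : actlev (mkSt (recs st) q' (Defs.sigma st) (trav st)
                  (PProc r (rv R0) (rlvl R0) (rtime R0) (trav st) [])) = actlev st).
  { rewrite (actlev_pop Hph). unfold actlev, qlev. simpl. rewrite Hq. simpl.
    unfold lvl_of. rewrite Hr. reflexivity. }
  split; [|split; [|apply refines_refl]]; constructor; try rewrite Hact; simpl.
  - intros j Hj. apply (sh_queue Hsh). rewrite Hq. right; exact Hj.
  - intros r1 u1 d1 tau1 tr1 done1 Heq. injection Heq as <- <- <- <- <- <-.
    exists (rpred R0). rewrite Hr. destruct R0; reflexivity.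
  - apply (sh_window Hsh).
  - apply (sh_levels Hsh).
  - apply (sh_sigma Hsh).
  - apply (sh_sound Hsh).
  - intros r1 u1 d1 tau1 tr1 done1 Heq. injection Heq as <- <- <- <- <- <-.
    split; [apply incl_refl|intros x t []].
  - apply (cv_trav Hcv).
  - intros i Ri Hi Hni Hp. apply (cv_expanded Hcv i Ri Hi).
    + rewrite Hq. intros [<-|Hi']; [apply Hp; reflexivity|auto].
    + unfold processing. rewrite Hph. discriminate.
Qed.

(* Once every target has been handled, the processed record is expanded:
   its edges in [B] were handled now, the others had been traversed before. *)
Lemma finish_preserved st r u d tau tr0 done :
  Shape st -> Coverage st -> ph st = PProc r u d tau tr0 done ->
  (forall v t, inB E u tau tr0 (u, v, t) -> In v done) ->
  preserved st (mkSt (recs st) (queue st) (Defs.sigma st) (trav st) (PPop V)).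
Proof.
  intros Hsh Hcv Hph Hall.
  assert (Hact : actlev st = d :: qlev st) by apply (actlev_proc Hph).
  assert (Hin : forall L, In L (qlev st) -> In L (actlev st)) by (rewrite Hact; right; auto).
  destruct (sh_current Hsh _ _ _ _ _ _ Hph) as (p & Hr).
  destruct (cv_current Hcv _ _ _ _ _ _ Hph) as [Hincl Hdone].
  split; [|split; [|apply refines_refl]]; constructor; unfold actlev; simpl.
  - apply (sh_queue Hsh).
  - discriminate.
  - pose proof (sh_window Hsh) as Hw. rewrite Hact in Hw. apply (two_blocks_tail _ _ Hw).
  - intros R0 L HR HL. apply (sh_levels Hsh); auto.
  - apply (sh_sigma Hsh).
  - apply (sh_sound Hsh).
  - discriminate.
  - intros y x t L He HL. apply (cv_trav Hcv y); auto.
  - intros i Ri Hi Hni _. destruct (Nat.eq_dec i r) as [->|Hir].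
    + rewrite Hr in Hi. injection Hi as <-. intros x t He Ht; simpl in *.
      destruct (classic (In (u, x, t) tr0)) as [Htr|Htr].
      * apply (cv_trav Hcv u x t d); [apply Hincl, Htr|rewrite Hact; left; auto].
      * assert (HB : inB E u tau tr0 (u, x, t)) by (repeat split; auto).
        apply Hdone; [apply (Hall x t HB)|exact HB].
    + apply (cv_expanded Hcv i Ri Hi Hni). unfold processing. rewrite Hph. congruence.
Qed.

(* Skipping [v]: its current value is at most [t], so some record of [v],
   of level at most [d + 1], already covers it. *)
Lemma skip_preserved st r u d tau tr0 done v t :
  Shape st -> Coverage st -> ph st = PProc r u d tau tr0 done ->
  inB E u tau tr0 (u, v, t) ->
  (forall t', inB E u tau tr0 (u, v, t') -> t <= t') ->
  ~ sgt (Defs.sigma st v) t ->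
  preserved st (mkSt (recs st) (queue st) (Defs.sigma st)
                  ((u, v, t) :: trav st) (PProc r u d tau tr0 (v :: done))).
Proof.
  intros Hsh Hcv Hph HB Hmin Hs.
  set (st' := mkSt _ _ _ _ _).
  assert (Hact : actlev st' = actlev st) by (rewrite (actlev_proc Hph); reflexivity).
  assert (Hv : covers (recs st) v (S d) t).
  { destruct (Defs.sigma st v) as [m|] eqn:Hm; simpl in Hs; [|tauto].
    destruct (proj1 (sh_sigma Hsh) v m Hm) as (R1 & HR1 & Hv1 & Ht1).
    exists R1; repeat split; auto; [|lra].
    apply (sh_levels Hsh R1 d HR1). rewrite (actlev_proc Hph); left; auto. }
  assert (Hsh' : Shape st').
  { constructor; try rewrite Hact; try apply Hsh.
    intros r1 u1 d1 tau1 tr1 done1 Heq. injection Heq as <- <- <- <- <- <-.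
    apply (sh_current Hsh _ _ _ _ _ _ Hph). }
  split; [exact Hsh'|split; [|apply refines_refl]].
  apply (handle_coverage st st' r u d tau tr0 done v t Hsh Hcv Hph); auto.
  - apply refines_refl.
  - intros L HL; left; rewrite <- Hact; exact HL.
Qed.

Lemma create_preserved st r u d tau tr0 done v t sg' :
  Shape st -> Coverage st -> ph st = PProc r u d tau tr0 done ->
  inB E u tau tr0 (u, v, t) ->
  (forall t', inB E u tau tr0 (u, v, t') -> t <= t') ->
  sgt (Defs.sigma st v) t -> sig_upd (Defs.sigma st) sg' v t ->
  preserved st (mkSt (recs st ++ [mkRec v (S d) t (Some r)])
                  (queue st ++ [length (recs st)]) sg'
                  ((u, v, t) :: trav st) (PProc r u d tau tr0 (v :: done))).
Proof.
  intros Hsh Hcv Hph HB Hmin Hs Hsg.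
  set (nr := mkRec v (S d) t (Some r)). set (st' := mkSt _ _ _ _ _).
  pose proof (current_level_bounds _ _ _ _ _ _ _ Hsh Hph) as Hbnd.
  assert (Hact : actlev st' = actlev st ++ [S d]).
  { rewrite (actlev_proc Hph). unfold actlev, qlev. simpl.
    rewrite (qlev_snoc _ _ nr (sh_queue Hsh)). reflexivity. }
  assert (Hact' : forall L, In L (actlev st') -> In L (actlev st) \/ L = S d).
  { intros L HL. rewrite Hact in HL. apply in_app_or in HL.
    destruct HL as [HL|[HL|[]]]; auto. }
  assert (Hnr : In nr (recs st')) by (apply in_or_app; right; left; auto).
  assert (Hrecs : forall R0, In R0 (recs st') -> R0 = nr \/ In R0 (recs st)).
  { intros R0 HR. apply in_app_or in HR. destruct HR as [HR|[HR|[]]]; auto. }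
  split; [|split; [|apply refines_app]]; [constructor|].
  - intros j Hj. simpl in *. rewrite length_app. simpl. apply in_app_or in Hj.
    destruct Hj as [Hj|[<-|[]]]; [specialize (sh_queue Hsh j Hj)|]; lia.
  - intros r1 u1 d1 tau1 tr1 done1 Heq. injection Heq as <- <- <- <- <- <-.
    destruct (sh_current Hsh _ _ _ _ _ _ Hph) as (p & Hr). exists p.
    simpl. rewrite nth_error_app1; auto. apply nth_error_Some. congruence.
  - rewrite Hact, (actlev_proc Hph). apply two_blocks_snoc.
    rewrite <- (actlev_proc Hph). apply (sh_window Hsh).
  - intros R0 L HR HL. destruct (Hact' L HL) as [HL'| ->]; destruct (Hrecs R0 HR) as [->|HR'].
    + specialize (Hbnd L HL'). simpl. lia.
    + apply (sh_levels Hsh); auto.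
    + simpl. lia.
    + assert (Hdin : In d (actlev st)) by (rewrite (actlev_proc Hph); left; auto).
      specialize (sh_levels Hsh R0 d HR' Hdin). lia.
  - exact (sigma_consistent_update _ _ _ _ nr (sh_sigma Hsh) Hsg Hs (refines_app _ _) Hnr Hrecs).
  - intros R0 HR. destruct (Hrecs R0 HR) as [->|HR'].
    + eapply current_sound; eauto.
    + apply (sh_sound Hsh R0 HR').
  - apply (handle_coverage st st' r u d tau tr0 done v t Hsh Hcv Hph); auto.
    + apply refines_app.
    + exists nr; repeat split; auto; lra.
    + intros i Ri Hi Hq _. simpl in *. split.
      * apply (nth_error_snoc_old _ _ _ _ Hi). intros ->.
        apply Hq, in_or_app. right; left; auto.
      * intros Hi'. apply Hq, in_or_app; auto.
Qed.

Lemma update_preserved st r u d tau tr0 done v t sg' j Rj :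
  Shape st -> Coverage st -> ph st = PProc r u d tau tr0 done ->
  inB E u tau tr0 (u, v, t) ->
  (forall t', inB E u tau tr0 (u, v, t') -> t <= t') ->
  sgt (Defs.sigma st v) t ->
  In j (queue st) -> nth_error (recs st) j = Some Rj -> rv Rj = v -> rlvl Rj = S d ->
  sig_upd (Defs.sigma st) sg' v t ->
  preserved st (mkSt (upd_nth (recs st) j (mkRec v (S d) t (Some r)))
                  (queue st) sg'
                  ((u, v, t) :: trav st) (PProc r u d tau tr0 (v :: done))).
Proof.
  intros Hsh Hcv Hph HB Hmin Hs Hjq Hj Hvj Hlj Hsg.
  set (nr := mkRec v (S d) t (Some r)). set (st' := mkSt _ _ _ _ _).
  pose proof (current_level_bounds _ _ _ _ _ _ _ Hsh Hph) as Hbnd.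
  destruct (sh_current Hsh _ _ _ _ _ _ Hph) as (p & Hr).
  assert (Hrj : r <> j) by (intros ->; rewrite Hj in Hr; injection Hr as ->; simpl in Hlj; lia).
  assert (Hearlier : t < rtime Rj).
  { apply (sgt_below_records _ _ _ _ (sh_sigma Hsh) (nth_error_In _ _ Hj)). congruence. }
  assert (Href : refines (recs st) (recs st')).
  { apply (refines_upd _ _ _ _ Hj); simpl; auto; lra. }
  assert (Hact : actlev st' = actlev st).
  { rewrite (actlev_proc Hph). unfold actlev, qlev. simpl.
    rewrite (qlev_upd _ _ _ _ _ Hj); auto. }
  assert (Hnr : In nr (recs st')) by (eapply nth_error_In, nth_error_upd_nth_eq, Hj).
  split; [|split; [|exact Href]]; [constructor; try rewrite Hact|].
  - intros k Hk. simpl. rewrite length_upd_nth. apply (sh_queue Hsh k Hk).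
  - intros r1 u1 d1 tau1 tr1 done1 Heq. injection Heq as <- <- <- <- <- <-.
    exists p. simpl. rewrite nth_error_upd_nth_neq; auto.
  - apply (sh_window Hsh).
  - intros R0 L HR HL. destruct (In_upd_nth _ _ _ _ HR) as [->|HR'].
    + specialize (Hbnd L HL). simpl. lia.
    + apply (sh_levels Hsh); auto.
  - apply (sigma_consistent_update _ _ _ _ nr (sh_sigma Hsh) Hsg Hs Href Hnr).
    intros R0 HR. apply (In_upd_nth _ _ _ _ HR).
  - intros R0 HR. destruct (In_upd_nth _ _ _ _ HR) as [->|HR'].
    + eapply current_sound; eauto.
    + apply (sh_sound Hsh R0 HR').
  - apply (handle_coverage st st' r u d tau tr0 done v t Hsh Hcv Hph); auto.
    + exists nr; repeat split; auto; lra.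
    + intros L HL; left; rewrite <- Hact; exact HL.
    + intros i Ri Hi Hq _. simpl in *.
      assert (Hij : i <> j) by (intros ->; auto).
      rewrite nth_error_upd_nth_neq in Hi; auto.
Qed.

Lemma step_preserved st st' :
  step E st st' -> Shape st -> Coverage st -> preserved st st'.
Proof.
  intros Hstep Hsh Hcv. destruct Hstep.
  - eapply pop_preserved; eauto.
  - eapply create_preserved; eauto.
  - eapply update_preserved; eauto.
  - eapply skip_preserved; eauto.
  - eapply finish_preserved; eauto.
Qed.

Lemma init_invariants st0 : init_state s ts st0 -> Shape st0 /\ Coverage st0.
Proof.
  intros (Hrecs & Hq & Hss & Hsx & Htr & Hph).
  assert (Hact : actlev st0 = [O]).
  { rewrite (actlev_pop Hph). unfold qlev. rewrite Hq, Hrecs. reflexivity. }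
  split; constructor; try rewrite Hact; rewrite ?Hrecs, ?Hq, ?Htr, ?Hph; simpl;
    try discriminate.
  - intros j [<-|[]]; lia.
  - exists O, 1%nat, O. reflexivity.
  - intros R0 L [<-|[]] [<-|[]]; simpl; lia.
  - split.
    + intros x m Hm. destruct (classic (x = s)) as [->|Hx].
      * rewrite Hss in Hm. injection Hm as <-.
        exists (mkRec s O ts None); simpl; repeat split; auto; lra.
      * rewrite Hsx in Hm by exact Hx. discriminate.
    + intros R0 [<-|[]]. exists ts; simpl; split; auto; lra.
  - intros R0 [<-|[]]. exists []; simpl; repeat split; auto; lra.
  - intros y x t L [].
  - intros [|i] Ri Hi Hni _; [exfalso; apply Hni; left; auto|destruct i; discriminate].
Qed.

Lemma run_preserved st st' :
  clos_refl_trans (state V) (step E) st st' -> Shape st -> Coverage st -> preserved st st'.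
Proof.
  induction 1 as [a b Hstep|a|a b c _ IH1 _ IH2]; intros Hsh Hcv.
  - apply step_preserved; auto.
  - split; [|split]; auto using refines_refl.
  - destruct (IH1 Hsh Hcv) as (Hshb & Hcvb & Hab).
    destruct (IH2 Hshb Hcvb) as (Hshc & Hcvc & Hbc).
    split; [|split]; auto. intros x L t Hc. apply Hbc, Hab, Hc.
Qed.

Lemma final_all_expanded st :
  Coverage st -> final_state st -> forall R0, In R0 (recs st) -> expanded (recs st) R0.
Proof.
  intros Hcv [Hph Hq] R0 HR. destruct (In_nth_error _ _ HR) as (i & Hi).
  apply (cv_expanded Hcv i R0 Hi).
  - rewrite Hq. intros [].
  - unfold processing. rewrite Hph. discriminate.
Qed.

Lemma run_records_sound st0 st R0 :
  init_state s ts st0 -> clos_refl_trans (state V) (step E) st0 st ->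
  In R0 (recs st) -> rv R0 <> s ->
  exists P, tpath E ts s (rv R0) P /\ length P = rlvl R0.
Proof.
  intros Hinit Hrun HR Hs. destruct (init_invariants st0 Hinit) as [Hsh0 Hcv0].
  destruct (run_preserved st0 st Hrun Hsh0 Hcv0) as (Hsh & _ & _).
  destruct (sh_sound Hsh R0 HR) as (P & Hw & Hlen & _).
  exists P. split; [split; [intros ->; simpl in Hw; congruence|exact Hw]|exact Hlen].
Qed.

Lemma final_covers_paths st0 st x P :
  init_state s ts st0 -> clos_refl_trans (state V) (step E) st0 st -> final_state st ->
  tpath E ts s x P -> covers (recs st) x (length P) (last_time ts P).
Proof.
  intros Hinit Hrun Hfinal [_ Hw]. destruct (init_invariants st0 Hinit) as [Hsh0 Hcv0].
  destruct (run_preserved st0 st Hrun Hsh0 Hcv0) as (_ & Hcv & Href).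
  apply (walk_covers (recs st) P s x ts O (final_all_expanded st Hcv Hfinal) Hw).
  apply Href. destruct Hinit as (Hrecs & _). rewrite Hrecs.
  exists (mkRec s O ts None); simpl; repeat split; auto; lra.
Qed.

End TemporalBFS.

(* The first (least-level) occurrence of a reachable [v <> s] in the BFS tree
   has level [dist(s, v)]: soundness bounds the distance by its level, and
   completeness bounds its level by the length of any temporal path. *)
Theorem lemma12 (V : Type) (E : list (edge V)) (s : V) (ts : R)
  (st0 st : state V) (v : V) :
  (exists lV : list V, forall x, In x lV) ->
  NoDup E ->
  (forall a b t, In (a, b, t) E -> a <> b) ->
  init_state s ts st0 ->
  clos_refl_trans (state V) (step E) st0 st ->
  final_state st ->
  v <> s ->
  reachable E ts s v ->
  exists Ro, In Ro (recs st) /\ rv Ro = v /\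
    (forall R', In R' (recs st) -> rv R' = v -> (rlvl Ro <= rlvl R')%nat) /\
    is_dist E ts s v (rlvl Ro).
Proof.
  intros _ _ _ Hinit Hrun Hfinal Hvs [P0 HP0].
  pose proof (fun P => final_covers_paths E s ts st0 st v P Hinit Hrun Hfinal) as Hcomplete.
  destruct (exists_min_by (@rlvl V) (fun R0 => rv R0 = v) (recs st)) as (Ro & HRo & Hv & Hmin).
  { destruct (Hcomplete P0 HP0) as (R0 & HR0 & Hv0 & _). eauto. }
  exists Ro. split; [exact HRo|split; [exact Hv|split; [exact Hmin|split]]].
  - rewrite <- Hv. apply (run_records_sound E s ts st0 st Ro Hinit Hrun HRo). congruence.
  - intros P HP. destruct (Hcomplete P HP) as (R0 & HR0 & Hv0 & Hl & _).
    specialize (Hmin R0 HR0 Hv0). lia.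
Qed.
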